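(* Let $n=4$, let $A$ be an irreducible $4\times 4$ Dickson matrix over $\mathbb{F}_{q^4}$ and let $B$ be a $4\times4$ Dickson matrix such that $A$ and $B$ have equal corresponding principal minors. Then $B$ is diagonally similar to $A$ or to $A^T$.
   Context: A Dickson matrix is the $n\times n$ matrix indexed by $\mathbb{Z}_n$ with $A[i|j]=a_{j-i}^{q^i}$ (indices mod $n$) associated to a $q$-polynomial $\sum_{j=0}^{n-1}a_jx^{q^j}\in\mathbb{F}_{q^n}[x]$. $A$ is reducible if there is a partition $\{\alpha,\beta\}$ of $\mathbb{Z}_n$ into nonempty sets with $A[\alpha|\beta]=0$ (rows $\alpha$, columns $\beta$), irreducible otherwise. Equal corresponding principal minors: $\det A[\alpha|\alpha]=\det B[\alpha|\alpha]$ for all nonempty $\alpha$. Diagonally similar: $B=D^{-1}AD$ with $D$ invertible diagonal. *)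

From HB Require Import structures.
From mathcomp Require Import all_boot all_order all_algebra all_fingroup all_field.
Set Implicit Arguments. Unset Strict Implicit. Unset Printing Implicit Defensive.
Import GRing.Theory.
Local Open Scope ring_scope.

(* Indices of an n x n matrix with n = k.+1 are 'I_k.+1, which carries the
   additive group structure of Z/nZ; (j - i) is subtraction mod n. *)

(* Dickson matrix of the q-polynomial sum_j a_j x^(q^j):
   A[i|j] = a_{j-i}^(q^i). *)
Definition dickson_mx (F : fieldType) (q k : nat) (a : 'I_k.+1 -> F)
  : 'M[F]_k.+1 := \matrix_(i, j) (a (j - i)) ^+ (q ^ i).

Definition reducible_mx (F : fieldType) (n : nat) (A : 'M[F]_n) : Prop :=
  exists alpha : {set 'I_n},
    [/\ alpha != set0, ~: alpha != set0 &
        forall i j, i \in alpha -> j \notin alpha -> A i j = 0].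

Definition irreducible_mx (F : fieldType) (n : nat) (A : 'M[F]_n) : Prop :=
  ~ reducible_mx A.

Definition principal_submx (F : fieldType) (n : nat) (A : 'M[F]_n)
  (alpha : {set 'I_n}) : 'M[F]_#|alpha| :=
  \matrix_(i, j) A (enum_val i) (enum_val j).

Definition equal_principal_minors (F : fieldType) (n : nat) (A B : 'M[F]_n) :=
  forall alpha : {set 'I_n}, alpha != set0 ->
    \det (principal_submx A alpha) = \det (principal_submx B alpha).

Definition diag_similar (F : fieldType) (n : nat) (A B : 'M[F]_n) :=
  exists D : 'M[F]_n, [/\ is_diag_mx D, D \in unitmx & B = invmx D *m A *m D].

From HB Require Import structures.
From mathcomp Require Import all_boot all_order all_algebra all_fingroup all_field.
From mathcomp Require Import ring.
Set Implicit Arguments. Unset Strict Implicit. Unset Printing Implicit Defensive.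
Import GRing.Theory.
Local Open Scope ring_scope.

(* Write s x := x ^+ q, so that s^4 = id on F and the Dickson matrix of a is
   (s^i a_(j-i)).  Its principal minors on {0}, {0,1}, {0,2}, {0,1,2} and
   {0,2,3} give a_0 = b_0, a_1 s(a_3) = b_1 s(b_3), a_2 s^2(a_2) = b_2 s^2(b_2)
   and two cubic relations; the determinant, corrected by the smaller minors,
   shows that A and B have the same total weight of 4-cycles.  Conjugating by
   D = diag(1, r, r s(r), r s(r) s^2(r)) with r s(r) s^2(r) s^3(r) = 1 multiplies
   a_k by r s(r) ... s^(k-1)(r), and A^T is the Dickson matrix of
   (a_0, s(a_3), s^2(a_2), s^3(a_1)).  All relations are invariant under this
   substitution, so we may assume a_1 != 0 (irreducibility rules out
   a_1 = a_3 = 0), and a case analysis on the vanishing of a_2, a_3, b_1, b_3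
   produces the ratio r, for A or for A^T; in the generic case the relations
   force a product of the two candidate equations for b_2 to vanish. *)

(* Cofactor expansion along the first row of the matrix (G i j); indexing by
   nat keeps the size of the matrix out of the types. *)
Fixpoint det_laplace (R : comPzRingType) (k : nat) (G : nat -> nat -> R) : R :=
  if k is k'.+1 then
    \sum_(j < k'.+1) (-1) ^+ j * G 0%N j * det_laplace k' (fun x y => G x.+1 (bump j y))
  else 1.

Lemma det_laplaceS (R : comPzRingType) k (G : nat -> nat -> R) :
  det_laplace k.+1 G =
  \sum_(j < k.+1) (-1) ^+ j * G 0%N j * det_laplace k (fun x y => G x.+1 (bump j y)).
Proof. by []. Qed.

Lemma det_mx_laplace (R : comPzRingType) k (G : nat -> nat -> R) :
  \det (\matrix_(i < k, j < k) G i j) = det_laplace k G.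
Proof.
elim: k G => [|k IHk] G; first by rewrite det_mx00.
rewrite (expand_det_row _ ord0) /=; apply: eq_bigr => j _.
rewrite /cofactor mxE add0n -IHk mulrCA mulrA; congr (_ * \det _).
by apply/matrixP => x y; rewrite !mxE.
Qed.

Section SmallLaplace.
Variables (R : comPzRingType) (G : nat -> nat -> R).

Lemma det_laplace1 : det_laplace 1 G = G 0 0.
Proof. by rewrite /= big_ord1 /= mulr1 expr0 mul1r. Qed.

Lemma det_laplace2 : det_laplace 2 G = G 0 0 * G 1 1 - G 0 1 * G 1 0.
Proof. by rewrite /= !big_ord_recl !big_ord0 /= /bump /=; ring. Qed.

Lemma det_laplace3 : det_laplace 3 G =
  G 0 0 * (G 1 1 * G 2 2 - G 1 2 * G 2 1) - G 0 1 * (G 1 0 * G 2 2 - G 1 2 * G 2 0)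
  + G 0 2 * (G 1 0 * G 2 1 - G 1 1 * G 2 0).
Proof. by rewrite /= !big_ord_recl !big_ord0 /= /bump /=; ring. Qed.

End SmallLaplace.

Lemma det_laplace4 (R : comPzRingType) (G : nat -> nat -> R) : det_laplace 4 G =
  G 0 0 * det_laplace 3 (fun x y => G x.+1 (bump 0 y))
  - G 0 1 * det_laplace 3 (fun x y => G x.+1 (bump 1 y))
  + G 0 2 * det_laplace 3 (fun x y => G x.+1 (bump 2 y))
  - G 0 3 * det_laplace 3 (fun x y => G x.+1 (bump 3 y)).
Proof. by rewrite det_laplaceS !big_ord_recl big_ord0 !det_laplace3 /= /bump /=; ring. Qed.

Definition seq_set n (s : seq nat) : {set 'I_n} := [set i : 'I_n | val i \in s].

Lemma enum_seq_set n (s : seq nat) : sorted ltn s -> all (fun k => k < n)%N s ->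
  map val (enum (seq_set n s)) = s.
Proof.
move=> ss sn; have -> : map val (enum (seq_set n s)) = filter (mem s) (iota 0 n).
  rewrite -val_enum_ord filter_map {1}/enum_mem -enumT; congr map.
  by apply: eq_filter => i /=; rewrite !inE.
apply: (irr_sorted_eq ltn_trans ltnn) => //.
  exact/(sorted_filter ltn_trans)/iota_ltn_sorted.
by move=> k; rewrite mem_filter mem_iota /= andb_idr // => /(allP sn).
Qed.

Definition pminor (F : fieldType) n (M : 'M[F]_n) (s : seq nat) : F :=
  \det (principal_submx M (seq_set n s)).

Lemma pminorE (F : fieldType) n (M : 'M[F]_n.+1) (s : seq nat) :
  sorted ltn s -> all (fun k => k < n.+1)%N s ->
  pminor M s =
  det_laplace (size s) (fun x y => M (inord (nth 0%N s x)) (inord (nth 0%N s y))).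
Proof.
move=> ss sn; have Es := enum_seq_set ss sn.
have Ecard : #|seq_set n.+1 s| = size s by rewrite cardE -(size_map val) Es.
rewrite /pminor -Ecard -det_mx_laplace; congr (\det _); apply/matrixP => i j.
rewrite !mxE; suff Ev (k : 'I_#|seq_set n.+1 s|) : enum_val k = inord (nth 0%N s k).
  by rewrite !Ev.
case: k => m hm; have ms : (m < size s)%N by rewrite -Ecard.
apply/val_inj; rewrite /= inordK; last by apply: (allP sn); rewrite mem_nth.
by rewrite -[in RHS]Es (nth_map ord0) -?cardE // (enum_val_nth ord0).
Qed.

Lemma equal_principal_minors_cons (F : fieldType) n (M N : 'M[F]_n.+1) i s :
  equal_principal_minors M N -> (i < n.+1)%N -> pminor M (i :: s) = pminor N (i :: s).
Proof.
move=> eqMN lt_in; apply: eqMN; apply/set0Pn; exists (inord i).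
by rewrite inE /= inordK ?mem_head.
Qed.

Definition cycle4_prod (R : pzRingType) (M : 'M[R]_4) (i j k l : nat) : R :=
  M (inord i) (inord j) * M (inord j) (inord k) * M (inord k) (inord l)
  * M (inord l) (inord i).

Definition cycles4 (R : pzRingType) (M : 'M[R]_4) : R :=
  cycle4_prod M 0 1 2 3 + cycle4_prod M 0 3 2 1 + cycle4_prod M 0 1 3 2
  + cycle4_prod M 0 2 3 1 + cycle4_prod M 0 2 1 3 + cycle4_prod M 0 3 1 2.

(* The Leibniz expansion of the determinant grouped by cycle type: d, p and c
   recover the diagonal entries, the products M i j * M j i and the two
   3-cycles through {i, j, k} from the principal minors m. *)
Section CyclesOfMinors.
Variables (R : comPzRingType) (m : seq nat -> R).
Let d i := m [:: i].
Let p i j := d i * d j - m [:: i; j].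
Let c i j k := m [:: i; j; k] - d i * d j * d k + p i j * d k + p i k * d j + p j k * d i.

Definition cycles4_of_minors : R :=
  - m [:: 0; 1; 2; 3] + d 0 * d 1 * d 2 * d 3
  - (p 0 1 * d 2 * d 3 + p 0 2 * d 1 * d 3 + p 0 3 * d 1 * d 2
     + p 1 2 * d 0 * d 3 + p 1 3 * d 0 * d 2 + p 2 3 * d 0 * d 1)
  + (c 0 1 2 * d 3 + c 0 1 3 * d 2 + c 0 2 3 * d 1 + c 1 2 3 * d 0)
  + (p 0 1 * p 2 3 + p 0 2 * p 1 3 + p 0 3 * p 1 2).

End CyclesOfMinors.

Lemma cycles4_pminorE (F : fieldType) (M : 'M[F]_4) :
  cycles4 M = cycles4_of_minors (pminor M).
Proof.
rewrite /cycles4_of_minors /cycles4 /cycle4_prod !pminorE //.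
by rewrite det_laplace4 !det_laplace3 !det_laplace2 !det_laplace1; ring.
Qed.

Lemma cycles4_eq (F : fieldType) (M N : 'M[F]_4) :
  equal_principal_minors M N -> cycles4 M = cycles4 N.
Proof.
move=> eqMN; rewrite !cycles4_pminorE /cycles4_of_minors.
by rewrite !(equal_principal_minors_cons _ eqMN).
Qed.

Section TwistedCoefficients.
Variables (F : fieldType) (s : F -> F).
Hypotheses (sM : {morph s : x y / x * y}) (s0 : s 0 = 0)
  (sK : forall x, s (s (s (s x))) = x).

Lemma s_eq0 x : (s x == 0) = (x == 0).
Proof.
apply/idP/idP => [/eqP sx0|/eqP->]; last by rewrite s0.
by rewrite -[x]sK sx0 !s0.
Qed.

Lemma s_neq0 x : x != 0 -> [/\ s x != 0, s (s x) != 0 & s (s (s x)) != 0].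
Proof. by move=> xn; rewrite !s_eq0. Qed.

Lemma sV x : s x^-1 = (s x)^-1.
Proof.
have [->|xn] := eqVneq x 0; first by rewrite invr0 s0 invr0.
have s1 : s 1 = 1 by rewrite -{2}(sK 1) -[s (s (s 1))]mul1r sM sK mulr1.
apply: (mulfI (x := s x)); first by rewrite s_eq0.
by rewrite -sM !divff ?s_eq0.
Qed.

Lemma s3_mul_s x y : s (s (s (x * s y))) = s (s (s x)) * y.
Proof. by rewrite !sM sK. Qed.

Definition norm4 x := x * s x * s (s x) * s (s (s x)).

Lemma norm4_eq0 x : (norm4 x == 0) = (x == 0).
Proof. by rewrite /norm4 !mulf_eq0 !s_eq0 !orbb. Qed.

Lemma norm4_s x : norm4 (s x) = norm4 x.
Proof. by rewrite /norm4 sK mulrC !mulrA. Qed.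

Lemma norm4M x y : norm4 (x * y) = norm4 x * norm4 y.
Proof. by rewrite /norm4 !sM; ring. Qed.

Lemma norm4_div x y : norm4 (x / y) = norm4 x / norm4 y.
Proof. by rewrite /norm4 !(sM, sV) !invfM; ring. Qed.

(* [twisted a b]: (b_1, b_2, b_3) is obtained from (a_1, a_2, a_3) by the
   conjugation with diag(1, r, r s(r), r s(r) s^2(r)), r of norm 1. *)
Definition twisted (a1 a2 a3 b1 b2 b3 : F) :=
  exists2 r, norm4 r = 1 &
    [/\ b1 = a1 * r, b2 = a2 * (r * s r) & b3 = a3 * (r * s r * s (s r))].

Definition cycle_sum (a1 a2 a3 : F) :=
  norm4 a1 + norm4 a3
  + a1 * s a2 * s (s (s a3)) * s (s a2) + a2 * s (s a1) * s (s (s a2)) * s a3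
  + a2 * s (s a3) * s a2 * s (s (s a1)) + a3 * s (s (s a2)) * s a1 * s (s a2).

Definition minor_relations (a1 a2 a3 b1 b2 b3 : F) :=
  [/\ a1 * s a3 = b1 * s b3,
      a2 * s (s a2) = b2 * s (s b2),
      a1 * s a1 * s (s a2) + a2 * s (s a3) * s a3
        = b1 * s b1 * s (s b2) + b2 * s (s b3) * s b3,
      a2 * s (s a1) * s (s (s a1)) + a3 * s (s (s a3)) * s (s a2)
        = b2 * s (s b1) * s (s (s b1)) + b3 * s (s (s b3)) * s (s b2) &
      cycle_sum a1 a2 a3 = cycle_sum b1 b2 b3].

Lemma minor_relations_tr a1 a2 a3 b1 b2 b3 :
  minor_relations a1 a2 a3 b1 b2 b3 ->
  minor_relations (s a3) (s (s a2)) (s (s (s a1))) b1 b2 b3.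
Proof.
case=> r1 r2 r3 r4 r5; split; rewrite ?sK -?r1 -?r2 -?r3 -?r4 -?r5; try ring.
by rewrite /cycle_sum /norm4 !sK; ring.
Qed.

Lemma twisted_of_norm1 a1 a2 a3 b1 b2 b3 :
  a1 != 0 -> norm4 b1 = norm4 a1 -> b2 * (a1 * s a1) = a2 * (b1 * s b1) ->
  a1 * s a3 = b1 * s b3 -> twisted a1 a2 a3 b1 b2 b3.
Proof.
move=> a1n Nb1 e2 r1; have b1n : b1 != 0 by rewrite -norm4_eq0 Nb1 norm4_eq0.
have [sa1n s2a1n s3a1n] := s_neq0 a1n; have [_ _ s3b1n] := s_neq0 b1n.
have e3 := congr1 (s \o s \o s) r1; rewrite /= !s3_mul_s in e3.
exists (b1 / a1); first by rewrite norm4_div Nb1 divff ?norm4_eq0.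
split; rewrite ?(sM, sV).
- by rewrite mulrC divfK.
- rewrite -[b2](mulfK (_ : a1 * s a1 != 0)) ?mulf_neq0 // e2.
  by field; rewrite sa1n a1n.
- rewrite -[b3](mulKf s3b1n) -e3.
  transitivity (a3 * norm4 a1 / (a1 * s a1 * s (s a1) * s (s (s b1)))).
    by rewrite /norm4; field; rewrite s3b1n s2a1n sa1n a1n.
  by rewrite -Nb1 /norm4; field; rewrite s2a1n sa1n a1n.
Qed.

Lemma twisted_of_norm3 a2 a3 b2 b3 :
  a3 != 0 -> norm4 b3 = norm4 a3 ->
  b2 * (s b3 * s (s b3)) = a2 * (s a3 * s (s a3)) -> twisted 0 a2 a3 0 b2 b3.
Proof.
move=> a3n Nb3 e2; have b3n : b3 != 0 by rewrite -norm4_eq0 Nb3 norm4_eq0.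
have [sb3n s2b3n s3b3n] := s_neq0 b3n.
exists (s a3 / s b3); first by rewrite norm4_div !norm4_s Nb3 divff ?norm4_eq0.
split; rewrite ?mul0r ?(sM, sV) ?sK //.
- rewrite -[b2](mulfK (_ : s b3 * s (s b3) != 0)) ?mulf_neq0 // e2.
  by field; rewrite s2b3n sb3n.
- transitivity (norm4 b3 / (s b3 * s (s b3) * s (s (s b3)))).
    by rewrite /norm4; field; rewrite s3b3n s2b3n sb3n.
  by rewrite Nb3 /norm4; field; rewrite s3b3n s2b3n sb3n.
Qed.

Lemma twisted_of_coef2 a1 a2 a3 b1 b2 b3 :
  a1 != 0 -> a2 != 0 -> a2 * s (s a2) = b2 * s (s b2) ->
  b2 * (a1 * s a1) = a2 * (b1 * s b1) -> a1 * s a3 = b1 * s b3 ->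
  twisted a1 a2 a3 b1 b2 b3.
Proof.
move=> a1n a2n r2 e2 r1; apply: twisted_of_norm1 => //.
have e2s := congr1 (s \o s) e2; rewrite /= !sM in e2s.
apply: (mulfI (_ : a2 * s (s a2) != 0)); first by rewrite mulf_neq0 ?s_eq0.
transitivity (a2 * (b1 * s b1) * (s (s a2) * (s (s b1) * s (s (s b1))))).
  by rewrite /norm4; ring.
by rewrite -e2 -e2s r2 /norm4; ring.
Qed.

Lemma minor_relations_twisted_a3eq0 a1 a2 b1 b2 b3 :
  a1 != 0 -> minor_relations a1 a2 0 b1 b2 b3 ->
  twisted a1 a2 0 b1 b2 b3 \/ twisted 0 (s (s a2)) (s (s (s a1))) b1 b2 b3.
Proof.
move=> a1n [r1 _ r3 r4 r5]; have [_ _ s3a1n] := s_neq0 a1n.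
move: r1 r3 r4 r5; rewrite /cycle_sum /norm4 !s0 !(mul0r, mulr0, addr0, add0r).
move=> /esym/eqP; rewrite mulf_eq0 s_eq0 => /orP[/eqP b1z|/eqP b3z].
  rewrite b1z !s0 !(mul0r, mulr0, addr0, add0r) => r3 _ r5; right.
  apply: twisted_of_norm3; rewrite ?sK //; first by rewrite !norm4_s /norm4 r5.
  by rewrite [RHS]mulrC r3; ring.
rewrite b3z !s0 !(mul0r, mulr0, addr0, add0r) => _ r4 r5; left.
have Nb1 : norm4 b1 = norm4 a1 by rewrite /norm4 r5.
have [_ s2b1n s3b1n] : [/\ s b1 != 0, s (s b1) != 0 & s (s (s b1)) != 0].
  by apply: s_neq0; rewrite -norm4_eq0 Nb1 norm4_eq0.
apply: twisted_of_norm1; rewrite ?b3z ?s0 ?mulr0 //.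
apply: (mulIf (_ : s (s b1) * s (s (s b1)) != 0)); first by rewrite mulf_neq0.
transitivity (b2 * s (s b1) * s (s (s b1)) * (a1 * s a1)); first by ring.
rewrite -r4; transitivity (a2 * norm4 a1); first by rewrite /norm4; ring.
by rewrite -Nb1 /norm4; ring.
Qed.

Lemma minor_relations_twisted_a2eq0 a1 a3 b1 b2 b3 :
  a1 != 0 -> a3 != 0 -> minor_relations a1 0 a3 b1 b2 b3 ->
  twisted a1 0 a3 b1 b2 b3 \/ twisted (s a3) 0 (s (s (s a1))) b1 b2 b3.
Proof.
move=> a1n a3n rel; have [r1 r2 _ _ r5] := rel.
have [r1' _ _ _ _] := minor_relations_tr rel.
have b2z : b2 = 0.
  by move/esym/eqP: r2; rewrite mul0r mulf_eq0 !s_eq0 orbb => /eqP.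
move: r5; rewrite /cycle_sum b2z !s0 !(mul0r, mulr0, addr0) => r5.
have eN : norm4 a1 * norm4 a3 = norm4 b1 * norm4 b3.
  by rewrite -[norm4 a3]norm4_s -[norm4 b3]norm4_s -!norm4M r1.
have : (norm4 b1 - norm4 a1) * (norm4 b1 - norm4 a3) = 0.
  transitivity (norm4 b1 * ((norm4 b1 + norm4 b3) - (norm4 a1 + norm4 a3))
                + (norm4 a1 * norm4 a3 - norm4 b1 * norm4 b3)); first by ring.
  by rewrite r5 eN !subrr mulr0 addr0.
move/eqP; rewrite mulf_eq0 !subr_eq0 => /orP[/eqP Nb1|/eqP Nb1].
  by left; apply: twisted_of_norm1; rewrite ?b2z ?mul0r.
by right; apply: twisted_of_norm1; rewrite ?norm4_s ?s_eq0 ?b2z ?mul0r.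
Qed.

Lemma minor_relations_twisted_a2neq0 a1 a2 a3 b1 b2 b3 :
  a1 != 0 -> a2 != 0 -> a3 != 0 -> minor_relations a1 a2 a3 b1 b2 b3 ->
  twisted a1 a2 a3 b1 b2 b3 \/ twisted (s a3) (s (s a2)) (s (s (s a1))) b1 b2 b3.
Proof.
move=> a1n a2n a3n rel; have [r1 r2 r3 _ _] := rel.
have [r1' r2' _ _ _] := minor_relations_tr rel.
have e1 : a1 * s a1 * (s a3 * s (s a3)) = b1 * s b1 * (s b3 * s (s b3)).
  transitivity (a1 * s a3 * s (a1 * s a3)); first by rewrite sM; ring.
  by rewrite r1 sM; ring.
(* The two factors are the candidate relations for b_2 attached to A and A^T. *)
have : (b2 * (a1 * s a1) - a2 * (b1 * s b1))
       * (b2 * (s a3 * s (s a3)) - s (s a2) * (b1 * s b1)) = 0.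
  transitivity (b2 * (b1 * s b1) * ((b1 * s b1 * s (s b2) + b2 * s (s b3) * s b3)
                                    - (a1 * s a1 * s (s a2) + a2 * s (s a3) * s a3))
     + b2 ^+ 2 * (a1 * s a1 * (s a3 * s (s a3)) - b1 * s b1 * (s b3 * s (s b3)))
     + (b1 * s b1) ^+ 2 * (a2 * s (s a2) - b2 * s (s b2))); first by ring.
  by rewrite r3 e1 r2 !subrr !mulr0 !addr0.
move/eqP; rewrite mulf_eq0 !subr_eq0 => /orP[/eqP e2|/eqP e2].
  by left; apply: twisted_of_coef2.
by right; apply: twisted_of_coef2; rewrite ?s_eq0.
Qed.

Lemma minor_relations_twisted_a1neq0 a1 a2 a3 b1 b2 b3 :
  a1 != 0 -> minor_relations a1 a2 a3 b1 b2 b3 ->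
  twisted a1 a2 a3 b1 b2 b3 \/ twisted (s a3) (s (s a2)) (s (s (s a1))) b1 b2 b3.
Proof.
move=> a1n; have [->|a3n] := eqVneq a3 0.
  by rewrite s0; apply: minor_relations_twisted_a3eq0.
have [->|a2n] := eqVneq a2 0; last exact: minor_relations_twisted_a2neq0.
by rewrite !s0; apply: minor_relations_twisted_a2eq0.
Qed.

Theorem minor_relations_twisted a1 a2 a3 b1 b2 b3 :
  a1 != 0 \/ a3 != 0 -> minor_relations a1 a2 a3 b1 b2 b3 ->
  twisted a1 a2 a3 b1 b2 b3 \/ twisted (s a3) (s (s a2)) (s (s (s a1))) b1 b2 b3.
Proof.
move=> a13n rel; have [a1z|a1n] := eqVneq a1 0; last exact: minor_relations_twisted_a1neq0.
have sa3n : s a3 != 0 by rewrite s_eq0; case: a13n => //; rewrite a1z eqxx.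
have := minor_relations_twisted_a1neq0 sa3n (minor_relations_tr rel).
by rewrite !sK => -[]; [right|left].
Qed.

End TwistedCoefficients.

Lemma diag_similar_of (F : fieldType) n (A B : 'M[F]_n) (d : 'I_n -> F) :
  (forall i, d i != 0) -> (forall i j, d i * B i j = A i j * d j) -> diag_similar A B.
Proof.
move=> dn0 dBA; pose D := diag_mx (\row_i d i).
have unitD : D \in unitmx.
  by rewrite unitmxE det_diag unitfE; apply/prodf_neq0 => i _; rewrite mxE.
exists D; split=> //; first exact: diag_mx_is_diag.
have DB : D *m B = A *m D.
  by apply/matrixP => i j; rewrite mul_diag_mx mul_mx_diag !mxE dBA.
by rewrite -mulmxA -DB mulmxA mulVmx // mul1mx.
Qed.

Lemma trmx_dickson (F : fieldType) q k (a : 'I_k.+1 -> F) :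
  (forall x : F, x ^+ (q ^ k.+1) = x) ->
  (dickson_mx q a)^T = dickson_mx q (fun i => a (- i) ^+ (q ^ i)).
Proof.
move=> frobK; have frobKn t (x : F) : x ^+ (q ^ (t * k.+1)) = x.
  by elim: t => [|t IHt]; rewrite ?mul0n ?expr1 // mulSn expnD exprM frobK IHt.
apply/matrixP => i j; rewrite !mxE -exprM -expnD.
have -> : - (j - i) = i - j by apply: opprB.
rewrite [in RHS](divn_eq ((j - i)%R + i) k.+1) expnD exprM frobKn.
by rewrite -[(_ %% _)%N]/(nat_of_ord (j - i + i)) subrK.
Qed.

Definition frob (R : pzSemiRingType) (q : nat) (x : R) : R := x ^+ q.

Lemma expr_expn_iter (R : pzSemiRingType) q i (x : R) : x ^+ (q ^ i) = iter i (frob q) x.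
Proof. by elim: i => [|i IHi]; rewrite ?expn0 ?expr1 // expnSr exprM IHi. Qed.

Section Dickson4.
Variables (F : fieldType) (q : nat).
Local Notation s := (@frob F q).

Lemma frobM : {morph s : x y / x * y}.
Proof. by move=> x y; apply: exprMn. Qed.

Lemma frob_neq0 x : x != 0 -> s x != 0.
Proof. by move=> xn; rewrite expf_neq0. Qed.

Lemma dickson_mx4E (a : 'I_4 -> F) (i j : 'I_4) :
  dickson_mx q a i j = iter i s (a (inord ((j + 4 - i) %% 4))).
Proof.
rewrite mxE expr_expn_iter; congr (iter _ _ (a _)); apply/val_inj.
by rewrite /= inordK ?ltn_pmod // modnDmr addnBA // ltnW.
Qed.

Lemma dickson_mx4_inordE (a : 'I_4 -> F) i j : (i < 4)%N -> (j < 4)%N ->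
  dickson_mx q a (inord i) (inord j) = iter i s (a (inord ((j + 4 - i) %% 4))).
Proof. by move=> lt_i4 lt_j4; rewrite dickson_mx4E !inordK. Qed.

Section Minors.
Variable a : 'I_4 -> F.
Local Notation a0 := (a (inord 0)).
Local Notation a1 := (a (inord 1)).
Local Notation a2 := (a (inord 2)).
Local Notation a3 := (a (inord 3)).

Lemma dickson_pminor0 : pminor (dickson_mx q a) [:: 0%N] = a0.
Proof. by rewrite pminorE // det_laplace1 dickson_mx4_inordE. Qed.

Lemma dickson_pminor01 : pminor (dickson_mx q a) [:: 0; 1]%N = a0 * s a0 - a1 * s a3.
Proof. by rewrite pminorE // det_laplace2 !dickson_mx4_inordE. Qed.

Lemma dickson_pminor02 :
  pminor (dickson_mx q a) [:: 0; 2]%N = a0 * s (s a0) - a2 * s (s a2).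
Proof. by rewrite pminorE // det_laplace2 !dickson_mx4_inordE. Qed.

Lemma dickson_pminor012 : pminor (dickson_mx q a) [:: 0; 1; 2]%N =
  a0 * s a0 * s (s a0) - a0 * (s a1 * s (s a3)) - s (s a0) * (a1 * s a3)
  - s a0 * (a2 * s (s a2)) + (a1 * s a1 * s (s a2) + a2 * s (s a3) * s a3).
Proof. by rewrite pminorE // det_laplace3 !dickson_mx4_inordE //=; ring. Qed.

Lemma dickson_pminor023 : pminor (dickson_mx q a) [:: 0; 2; 3]%N =
  a0 * s (s a0) * s (s (s a0)) - a0 * (s (s a1) * s (s (s a3)))
  - s (s (s a0)) * (a2 * s (s a2)) - s (s a0) * (s (s (s a1)) * a3)
  + (a2 * s (s a1) * s (s (s a1)) + a3 * s (s (s a3)) * s (s a2)).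
Proof. by rewrite pminorE // det_laplace3 !dickson_mx4_inordE //=; ring. Qed.

Lemma dickson_cycles4 : cycles4 (dickson_mx q a) = cycle_sum s a1 a2 a3.
Proof.
by rewrite /cycles4 /cycle4_prod !dickson_mx4_inordE //= /cycle_sum /norm4; ring.
Qed.

End Minors.

Section Order4.
Hypotheses (q_gt0 : (0 < q)%N) (frobK : forall x : F, s (s (s (s x))) = x).

Lemma frob0 : s 0 = 0.
Proof. by rewrite /frob expr0n eqn0Ngt q_gt0. Qed.

Lemma dickson_minor_relations (a b : 'I_4 -> F) :
  equal_principal_minors (dickson_mx q a) (dickson_mx q b) ->
  b (inord 0) = a (inord 0) /\
  minor_relations s (a (inord 1)) (a (inord 2)) (a (inord 3))
                    (b (inord 1)) (b (inord 2)) (b (inord 3)).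
Proof.
move=> eqm; have E i l := equal_principal_minors_cons l eqm (i := i).
have e0 : b (inord 0) = a (inord 0).
  by have := E 0%N [::] isT; rewrite !dickson_pminor0.
have r1 : a (inord 1) * s (a (inord 3)) = b (inord 1) * s (b (inord 3)).
  by have := E 0%N [:: 1%N] isT; rewrite !dickson_pminor01 e0 => /addrI/oppr_inj.
have r2 : a (inord 2) * s (s (a (inord 2))) = b (inord 2) * s (s (b (inord 2))).
  by have := E 0%N [:: 2%N] isT; rewrite !dickson_pminor02 e0 => /addrI/oppr_inj.
have r1s := congr1 s r1; rewrite !frobM in r1s.
have r1s2 := congr1 s r1s; rewrite !frobM in r1s2.
have r1s3 := congr1 (s \o s \o s) r1; rewrite /= !(s3_mul_s frobM frobK) in r1s3.
split=> //; split=> //.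
- by move: (E 0%N [:: 1; 2]%N isT); rewrite !dickson_pminor012 e0 r1 r1s r2 => /addrI.
- by move: (E 0%N [:: 2; 3]%N isT); rewrite !dickson_pminor023 e0 r1s2 r1s3 r2 => /addrI.
- by rewrite -!dickson_cycles4; apply: cycles4_eq.
Qed.

Lemma dickson_irreducible_coef (a : 'I_4 -> F) :
  irreducible_mx (dickson_mx q a) -> a (inord 1) != 0 \/ a (inord 3) != 0.
Proof.
move=> irr; have [a1z|] := eqVneq (a (inord 1)) 0; last by left.
have [a3z|] := eqVneq (a (inord 3)) 0; last by right.
case: irr; exists (seq_set 4 [:: 0; 2]%N); split.
- by apply/set0Pn; exists (inord 0); rewrite inE /= inordK.
- by apply/set0Pn; exists (inord 1); rewrite !inE /= inordK.
move=> i j; rewrite !inE dickson_mx4E.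
case: i => [[|[|[|[|i]]]] Hi] //; case: j => [[|[|[|[|j]]]] Hj] //= _ _.
all: by rewrite ?a1z ?a3z ?frob0.
Qed.

Lemma dickson_diag_similar (a b : 'I_4 -> F) :
  b (inord 0) = a (inord 0) ->
  twisted s (a (inord 1)) (a (inord 2)) (a (inord 3))
            (b (inord 1)) (b (inord 2)) (b (inord 3)) ->
  diag_similar (dickson_mx q a) (dickson_mx q b).
Proof.
move=> e0 [r Nr [e1 e2 e3]].
have rn : r != 0.
  by apply: contra_eq_neq Nr => ->; rewrite /norm4 !mul0r eq_sym oner_neq0.
have [sr s2r] := (frob_neq0 rn, frob_neq0 (frob_neq0 rn)).
have s3rE : s (s (s r)) = (r * s r * s (s r))^-1.
  apply: (mulfI (_ : r * s r * s (s r) != 0)); first by rewrite !mulf_neq0.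
  by rewrite divff ?mulf_neq0 //; apply: Nr.
apply: (@diag_similar_of _ _ _ _ (fun i => nth 1 [:: 1; r; r * s r; r * s r * s (s r)] i)).
  by case=> [[|[|[|[|]]]]] //= _; rewrite ?oner_eq0 ?mulf_neq0.
move=> i j; rewrite !dickson_mx4E.
case: i => [[|[|[|[|i]]]] Hi] //; case: j => [[|[|[|[|j]]]] Hj] //=.
all: rewrite ?e0 ?e1 ?e2 ?e3 ?frobM ?frobK ?s3rE; field.
all: by rewrite ?rn ?sr ?s2r ?mulf_neq0.
Qed.

Lemma trmx_dickson_diag_similar (a b : 'I_4 -> F) :
  b (inord 0) = a (inord 0) ->
  twisted s (s (a (inord 3))) (s (s (a (inord 2)))) (s (s (s (a (inord 1)))))
            (b (inord 1)) (b (inord 2)) (b (inord 3)) ->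
  diag_similar (dickson_mx q a)^T (dickson_mx q b).
Proof.
move=> e0 tw; rewrite trmx_dickson => [|x]; last by rewrite expr_expn_iter /= frobK.
have coefE k : (k < 4)%N ->
    a (- inord k) ^+ (q ^ (inord k : 'I_4)) = iter k s (a (inord ((4 - k) %% 4))).
  move=> lt_k4; rewrite expr_expn_iter inordK //; congr (iter _ _ (a _)).
  by apply/val_inj; rewrite /= !inordK ?ltn_pmod.
by apply: dickson_diag_similar; rewrite !coefE.
Qed.

End Order4.
End Dickson4.

Theorem mainTheorem11 (F : finFieldType) (q : nat) (hF : #|F| = (q ^ 4)%N)
  (a b : 'I_4 -> F) :
  irreducible_mx (dickson_mx q a) ->
  equal_principal_minors (dickson_mx q a) (dickson_mx q b) ->
  diag_similar (dickson_mx q a) (dickson_mx q b) \/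
  diag_similar (dickson_mx q a)^T (dickson_mx q b).
Proof.
move=> irr eqm.
have q_gt0 : (0 < q)%N.
  have : (0 < q ^ 4)%N by rewrite -hF; apply/card_gt0P; exists 0.
  by rewrite expn_gt0 orbF.
have frobK (x : F) : frob q (frob q (frob q (frob q x))) = x.
  by rewrite -[LHS]/(iter 4 (frob q) x) -expr_expn_iter -hF expf_card.
have [e0 rel] := dickson_minor_relations frobK eqm.
have := minor_relations_twisted (@frobM F q) (frob0 F q_gt0) frobK
  (dickson_irreducible_coef q_gt0 irr) rel.
by case=> tw; [left; apply: dickson_diag_similar | right; apply: trmx_dickson_diag_similar].
Qed.
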